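(* Let $p_1,\dots,p_n>0$ with $\sum_i p_i=1$, let $c_1,\dots,c_n\in[-1,1]$, put $\bar c=\sum_i p_i c_i$, and fix $\Delta>0$. For $g\ge 0$ define $$I_a(g)=H_B\!\left(\frac{1+\sqrt{\bar c^{\,2}+(1-\bar c^{\,2})e^{-g^2/\Delta^2}}}{2}\right)-\sum_{i=1}^n p_i\,H_B\!\left(\frac{1+\sqrt{c_i^{2}+(1-c_i^{2})e^{-g^2/\Delta^2}}}{2}\right).$$ Then $I_a(g)$ is a monotonically non-decreasing function of $g$ on $[0,\infty)$.
   Context: $H_B(\lambda)=-\lambda\log_2\lambda-(1-\lambda)\log_2(1-\lambda)$ is the binary Shannon entropy (with $0\log 0=0$). Physical meaning: an ensemble of qubit states $\rho_i=\tfrac12\big(I+r_i(\sin\theta_i\cos\phi_i\,\sigma_x+\sin\theta_i\sin\phi_i\,\sigma_y+\cos\theta_i\,\sigma_z)\big)$, $0\le r_i\le1$, sent with probabilities $p_i$, is measured by a device with initial Gaussian wavefunction $\Phi(q)=(2\pi\Delta^2)^{-1/4}e^{-q^2/(4\Delta^2)}$ via the unitary $e^{-ig\sigma_z\otimes p}$ ($p$ the momentum operator of the device); with $c_i=r_i\cos\theta_i$, $I_a(g)=S(\rho'_D)-\sum_ip_iS(\rho'_{iD})$ is the information gain (Holevo quantity of the device states), where $\rho'_{iD}$ is the device state after interaction with $\rho_i$ and $\rho'_D=\sum_ip_i\rho'_{iD}$. *)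

From Stdlib Require Import Reals Lra.
Open Scope R_scope.

Fixpoint sumR (n : nat) (f : nat -> R) : R :=
  match n with
  | O => 0
  | S m => sumR m f + f m
  end.

Definition log2 (x : R) : R := ln x / ln 2.

Definition xlog2x (x : R) : R := if Req_EM_T x 0 then 0 else x * log2 x.
Definition H_B (l : R) : R := - xlog2x l - xlog2x (1 - l).

(* argument of H_B for a qubit with z-Bloch component c *)
Definition Ia_arg (Delta g c : R) : R :=
  (1 + sqrt (c ^ 2 + (1 - c ^ 2) * exp (- g ^ 2 / Delta ^ 2))) / 2.

Definition Ia (n : nat) (p c : nat -> R) (Delta g : R) : R :=
  let cbar := sumR n (fun i => p i * c i) in
  H_B (Ia_arg Delta g cbar) - sumR n (fun i => p i * H_B (Ia_arg Delta g (c i))).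

(* Put w_i = 1 - c_i^2, wb = 1 - cbar^2 and a = 1 - exp (-g^2/Delta^2), which lies in
   [0, 1) and is nondecreasing in g.  Every entropy term of I_a has the form
   Hbloch (a w) with Hbloch y = H_B ((1 + sqrt (1 - y)) / 2), so
       I_a(g) = gain(a) := Hbloch (a wb) - sum_i p_i Hbloch (a w_i),
   and sum_i p_i w_i <= wb because a variance is nonnegative.  For 0 < a < 1,
       a gain'(a) = (G (a wb) - sum_i p_i G (a w_i)) / (2 ln 2),
   where G y = y artanh (r) / r, r = sqrt (1 - y), equals the integral over s in [0, 1]
   of y / (1 - (1 - y) s^2).  That integrand is concave and nondecreasing in y, so G is
   too, and Jensen's inequality gives gain' >= 0 on (0, 1).  With continuity of gain at
   a = 0 (from x ln x -> 0) the mean value theorem shows gain is nondecreasing. *)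

From Coquelicot Require Import Coquelicot.
From Stdlib Require Import Reals Lra.
Open Scope R_scope.

Lemma sumR_ext n f g : (forall i, (i < n)%nat -> f i = g i) -> sumR n f = sumR n g.
Proof.
  induction n as [|n IH]; intros H; simpl; [reflexivity|].
  rewrite IH, H by auto. reflexivity.
Qed.

Lemma sumR_le n f g : (forall i, (i < n)%nat -> f i <= g i) -> sumR n f <= sumR n g.
Proof.
  induction n as [|n IH]; intros H; simpl; [lra|].
  apply Rplus_le_compat; [apply IH; auto|apply H; auto].
Qed.

Lemma sumR_nonneg n f : (forall i, (i < n)%nat -> 0 <= f i) -> 0 <= sumR n f.
Proof.
  intros H. replace 0 with (sumR n (fun _ => 0)) by (clear; induction n; simpl; lra).
  now apply sumR_le.
Qed.

Lemma sumR_scal n k f : sumR n (fun i => k * f i) = k * sumR n f.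
Proof. induction n as [|n IH]; simpl; [ring|]. rewrite IH. ring. Qed.

Lemma sumR_affine n (p x : nat -> R) A B :
  sumR n (fun i => p i * (A + B * x i)) = A * sumR n p + B * sumR n (fun i => p i * x i).
Proof. induction n as [|n IH]; simpl; [ring|]. rewrite IH. ring. Qed.

Lemma sumR_derive n (F : nat -> R -> R) (dF : nat -> R) x :
  (forall i, (i < n)%nat -> is_derive (F i) x (dF i)) ->
  is_derive (fun t => sumR n (fun i => F i t)) x (sumR n dF).
Proof.
  induction n as [|n IH]; intros H; simpl.
  - exact (is_derive_const (K := R_AbsRing) (V := R_NormedModule) 0 x).
  - apply (is_derive_plus (K := R_AbsRing) (V := R_NormedModule) (fun t => sumR n (fun i => F i t)) (F n));
      [apply IH; auto|apply H; auto].
Qed.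

Lemma sumR_continuity n (F : nat -> R -> R) x :
  (forall i, (i < n)%nat -> continuity_pt (F i) x) ->
  continuity_pt (fun t => sumR n (fun i => F i t)) x.
Proof.
  induction n as [|n IH]; intros H; simpl.
  - apply continuity_pt_const. now intros u v.
  - apply (continuity_pt_plus (fun t => sumR n (fun i => F i t)) (F n));
      [apply IH; auto|apply H; auto].
Qed.

Lemma sumR_RInt n (F : nat -> R -> R) (I : nat -> R) a b :
  (forall i, (i < n)%nat -> is_RInt (F i) a b (I i)) ->
  is_RInt (fun t => sumR n (fun i => F i t)) a b (sumR n I).
Proof.
  induction n as [|n IH]; intros H; simpl.
  - pose proof (is_RInt_const (V := R_NormedModule) a b 0) as H0.
    change (scal (b - a) 0) with ((b - a) * 0) in H0. now rewrite Rmult_0_r in H0.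
  - apply (is_RInt_plus (V := R_NormedModule)); [apply IH; auto|apply H; auto].
Qed.

Lemma jensen_supporting_line n (p y : nat -> R) (f : R -> R) T :
  (forall i, (i < n)%nat -> 0 <= p i) -> sumR n p = 1 ->
  (forall i, (i < n)%nat ->
     f (y i) <= f (sumR n (fun j => p j * y j)) + T * (y i - sumR n (fun j => p j * y j))) ->
  sumR n (fun i => p i * f (y i)) <= f (sumR n (fun j => p j * y j)).
Proof.
  set (m := sumR n (fun j => p j * y j)). intros Hp Hsum Hline.
  apply Rle_trans with (sumR n (fun i => p i * ((f m - T * m) + T * y i))).
  - apply sumR_le. intros i Hi. apply Rmult_le_compat_l; [auto|].
    specialize (Hline i Hi). lra.
  - rewrite sumR_affine, Hsum. fold m. lra.
Qed.

(* The variance of a weighted family is nonnegative, in the form used for the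
   Bloch components: the mean of 1 - c^2 is at most 1 - (mean of c)^2. *)
Lemma mean_one_minus_sq n (p c : nat -> R) :
  (forall i, (i < n)%nat -> 0 <= p i) -> sumR n p = 1 ->
  sumR n (fun i => p i * (1 - c i ^ 2)) <= 1 - sumR n (fun i => p i * c i) ^ 2.
Proof.
  intros Hp Hsum.
  apply (jensen_supporting_line n p c (fun x => 1 - x ^ 2)
           (-2 * sumR n (fun i => p i * c i)) Hp Hsum).
  intros i _. pose proof (pow2_ge_0 (c i - sumR n (fun j => p j * c j))). nra.
Qed.

Definition xlnx (x : R) : R := x * ln x.

Lemma ln_le_pred z : 0 < z -> ln z <= z - 1.
Proof.
  intros Hz. rewrite <- (ln_exp (z - 1)).
  apply ln_le; [exact Hz|]. pose proof (exp_ineq1_le (z - 1)). lra.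
Qed.

Lemma ln_nonpos x : ~ 0 < x -> ln x = 0.
Proof. intros H. unfold ln. destruct (Rlt_dec 0 x); [contradiction|reflexivity]. Qed.

(* Quantitative form of x ln x -> 0: apply ln z <= z - 1 at z = 1 / sqrt x. *)
Lemma xlnx_bound x : 0 < x <= 1 -> Rabs (xlnx x) <= 2 * sqrt x.
Proof.
  intros Hx. set (s := sqrt x).
  assert (Hs : 0 < s) by (apply sqrt_lt_R0; lra).
  assert (Hss : s * s = x) by (apply sqrt_sqrt; lra).
  assert (Hln : ln x = 2 * ln s) by (rewrite <- Hss, ln_mult by lra; ring).
  assert (Hneg : ln s <= 0).
  { rewrite <- ln_1. apply ln_le; nra. }
  assert (Hinv : - ln s <= / s - 1).
  { rewrite <- ln_Rinv by lra. apply ln_le_pred, Rinv_0_lt_compat, Hs. }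
  assert (Hsinv : s * / s = 1) by (field; lra).
  unfold xlnx. rewrite Hln, <- Hss, Rabs_left1 by nra. nra.
Qed.

Lemma xlnx_continuous x : 0 <= x -> continuity_pt xlnx x.
Proof.
  intros [Hx|<-].
  - apply continuity_pt_filterlim, (ex_derive_continuous (V := R_NormedModule)).
    unfold xlnx. auto_derive. exact Hx.
  - intros eps Heps. exists (Rmin 1 (eps * eps / 4)).
    split; [apply Rmin_pos; nra|].
    intros x [_ Hx]. simpl in *. unfold R_dist in *.
    rewrite Rminus_0_r in Hx. unfold xlnx at 2. rewrite Rmult_0_l, Rminus_0_r.
    assert (Hx1 : Rabs x < 1) by (eapply Rlt_le_trans; [exact Hx|apply Rmin_l]).
    assert (Hx2 : Rabs x < eps * eps / 4) by (eapply Rlt_le_trans; [exact Hx|apply Rmin_r]).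
    destruct (Rlt_dec 0 x) as [Hp|Hn].
    + rewrite Rabs_right in Hx1, Hx2 by lra.
      assert (Hs : 0 <= sqrt x) by apply sqrt_pos.
      assert (Hss : sqrt x * sqrt x = x) by (apply sqrt_sqrt; lra).
      pose proof (xlnx_bound x (conj Hp (Rlt_le _ _ Hx1))). nra.
    + unfold xlnx. rewrite ln_nonpos, Rmult_0_r, Rabs_R0 by exact Hn. exact Heps.
Qed.

Lemma ln2_pos : 0 < ln 2.
Proof. rewrite <- ln_1. apply ln_increasing; lra. Qed.

Lemma xlog2x_xlnx x : xlog2x x = xlnx x / ln 2.
Proof.
  unfold xlog2x, log2, xlnx. destruct (Req_EM_T x 0) as [->|_]; unfold Rdiv; ring.
Qed.

(* Entropy of a qubit whose Bloch vector has length sqrt (1 - y), for y in [0, 1]. *)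
Definition Hbloch (y : R) : R := H_B ((1 + sqrt (1 - y)) / 2).

Definition dHbloch (y : R) : R :=
  (ln ((1 + sqrt (1 - y)) / 2) - ln ((1 - sqrt (1 - y)) / 2)) / (4 * sqrt (1 - y) * ln 2).

Lemma Hbloch_xlnx y :
  Hbloch y = - (xlnx ((1 + sqrt (1 - y)) / 2) + xlnx ((1 - sqrt (1 - y)) / 2)) / ln 2.
Proof.
  unfold Hbloch, H_B. rewrite !xlog2x_xlnx.
  replace (1 - (1 + sqrt (1 - y)) / 2) with ((1 - sqrt (1 - y)) / 2) by field.
  unfold Rdiv. ring.
Qed.

Lemma sqrt_one_minus_range y : 0 < y < 1 -> 0 < sqrt (1 - y) < 1.
Proof.
  intros Hy. split; [apply sqrt_lt_R0; lra|].
  assert (H : sqrt (1 - y) < sqrt 1) by (apply sqrt_lt_1_alt; lra).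
  now rewrite sqrt_1 in H.
Qed.

Lemma Hbloch_derive y : 0 < y < 1 -> is_derive Hbloch y (dHbloch y).
Proof.
  intros Hy. destruct (sqrt_one_minus_range y Hy) as [Hr Hr1]. pose proof ln2_pos.
  eapply is_derive_ext; [intros t; symmetry; apply Hbloch_xlnx|].
  unfold xlnx. auto_derive.
  - replace (1 + - y) with (1 - y) by ring. repeat split; lra.
  - unfold dHbloch. replace (1 + - y) with (1 - y) by ring.
    replace (1 + - sqrt (1 - y)) with (1 - sqrt (1 - y)) by ring.
    set (r := sqrt (1 - y)) in *.
    set (A := ln ((1 + r) / 2)). set (B := ln ((1 - r) / 2)).
    change (ln ((1 + r) * / 2)) with A. change (ln ((1 - r) * / 2)) with B.
    field. lra.
Qed.

Lemma continuity_pt_of_ex_derive (f : R -> R) x : ex_derive f x -> continuity_pt f x.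
Proof. intros H. apply continuity_pt_filterlim, (ex_derive_continuous (V := R_NormedModule)), H. Qed.

(* Continuity includes y = 0, where the smaller eigenvalue (1 - sqrt (1 - y)) / 2
   tends to 0 and only the continuity of x ln x at 0 is available. *)
Lemma Hbloch_continuous y : 0 <= y < 1 -> continuity_pt Hbloch y.
Proof.
  intros Hy. pose proof ln2_pos.
  assert (Hr : 0 < sqrt (1 - y)) by (apply sqrt_lt_R0; lra).
  assert (Hr1 : sqrt (1 - y) <= sqrt 1) by (apply sqrt_le_1_alt; lra).
  rewrite sqrt_1 in Hr1.
  assert (Hxl : forall s : R, -1 <= s <= 1 ->
            continuity_pt (fun t => xlnx ((1 + s * sqrt (1 - t)) / 2)) y).
  { intros s Hs.
    apply (continuity_pt_comp (fun t => (1 + s * sqrt (1 - t)) / 2) xlnx).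
    - apply continuity_pt_of_ex_derive. auto_derive. lra.
    - apply xlnx_continuous. nra. }
  eapply continuity_pt_ext; [intros t; symmetry; apply Hbloch_xlnx|].
  apply (continuity_pt_div (fun t => - (xlnx ((1 + sqrt (1 - t)) / 2)
                                         + xlnx ((1 - sqrt (1 - t)) / 2))) (fun _ => ln 2)).
  - apply continuity_pt_opp, continuity_pt_plus.
    + apply (continuity_pt_ext (fun t => xlnx ((1 + 1 * sqrt (1 - t)) / 2))).
      { intros t. now rewrite Rmult_1_l. }
      apply Hxl. lra.
    + apply (continuity_pt_ext (fun t => xlnx ((1 + -1 * sqrt (1 - t)) / 2))).
      { intros t. do 2 f_equal. ring. }
      apply Hxl. lra.
  - apply continuity_pt_const. now intros u v.
  - lra.
Qed.

(* G y = y artanh (r) / r with r = sqrt (1 - y), written with logarithms; it is the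
   integral over s in [0, 1] of kernel y s, and y dHbloch y = G y / (2 ln 2). *)

Definition kernel (y s : R) : R := y / (1 - (1 - y) * s ^ 2).

Definition Gbloch (y : R) : R :=
  y * (ln ((1 + sqrt (1 - y)) / 2) - ln ((1 - sqrt (1 - y)) / 2)) / (2 * sqrt (1 - y)).

Lemma Gbloch_dHbloch y : 0 <= y < 1 -> y * dHbloch y = Gbloch y / (2 * ln 2).
Proof.
  intros Hy. pose proof ln2_pos.
  assert (0 < sqrt (1 - y)) by (apply sqrt_lt_R0; lra).
  unfold dHbloch, Gbloch. field. lra.
Qed.

(* For y > 0 the antiderivative of kernel y in s is
   y (ln ((1 + r s) / 2) - ln ((1 - r s) / 2)) / (2 r). *)
Lemma Gbloch_RInt y : 0 <= y < 1 -> is_RInt (kernel y) 0 1 (Gbloch y).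
Proof.
  intros Hy. destruct (Req_dec y 0) as [->|Hy0].
  - apply (is_RInt_ext (fun _ => 0)).
    { intros s _. symmetry. apply Rmult_0_l. }
    pose proof (is_RInt_const (V := R_NormedModule) 0 1 0) as H0.
    change (scal (1 - 0) 0) with ((1 - 0) * 0) in H0.
    replace (Gbloch 0) with ((1 - 0) * 0) by (unfold Gbloch, Rdiv; ring). exact H0.
  - destruct (sqrt_one_minus_range y ltac:(lra)) as [Hr Hr1].
    assert (Hrr : sqrt (1 - y) * sqrt (1 - y) = 1 - y) by (apply sqrt_sqrt; lra).
    set (r := sqrt (1 - y)) in *.
    set (F := fun s => y * (ln ((1 + r * s) / 2) - ln ((1 - r * s) / 2)) / (2 * r)).
    replace (Gbloch y) with (minus (F 1) (F 0)).
    + apply (is_RInt_derive (V := R_CompleteNormedModule)).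
      * intros s Hs. rewrite Rmin_left, Rmax_right in Hs by lra.
        assert (r * s <= r) by nra. assert (0 <= r * s) by nra.
        unfold F. auto_derive; [repeat split; lra|].
        unfold kernel. rewrite <- Hrr.
        set (A := ln ((1 + r * s) / 2)). set (B := ln ((1 - r * s) / 2)).
        change (ln ((1 + r * s) * / 2)) with A. change (ln ((1 + - (r * s)) * / 2)) with B.
        field. nra.
      * intros s Hs. rewrite Rmin_left, Rmax_right in Hs by lra.
        apply (ex_derive_continuous (V := R_NormedModule)).
        unfold kernel. auto_derive. nra.
    + unfold minus, plus, opp. simpl. unfold F, Gbloch. fold r.
      rewrite Rmult_1_r, Rmult_0_r, Rplus_0_r, Rminus_0_r. field. lra.
Qed.

(* For fixed s in (0, 1), y |-> kernel y s is concave on [0, +oo): it lies below its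
   tangent line at any m >= 0, the gap being a square over positive factors. *)
Lemma kernel_tangent y m s : 0 < s < 1 -> 0 <= y -> 0 <= m ->
  kernel y s <= kernel m s + (1 - s ^ 2) / (1 - (1 - m) * s ^ 2) ^ 2 * (y - m).
Proof.
  intros Hs Hy Hm. unfold kernel.
  assert (HD : 0 < 1 - (1 - m) * s ^ 2) by nra.
  assert (HE : 0 < 1 - (1 - y) * s ^ 2) by nra.
  assert (Gap : m / (1 - (1 - m) * s ^ 2) + (1 - s ^ 2) / (1 - (1 - m) * s ^ 2) ^ 2 * (y - m)
                - y / (1 - (1 - y) * s ^ 2)
              = (1 - s ^ 2) * s ^ 2 * (y - m) ^ 2
                / ((1 - (1 - m) * s ^ 2) ^ 2 * (1 - (1 - y) * s ^ 2))).
  { field. lra. }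
  assert (0 <= (1 - s ^ 2) * s ^ 2 * (y - m) ^ 2
               / ((1 - (1 - m) * s ^ 2) ^ 2 * (1 - (1 - y) * s ^ 2))).
  { apply Rle_mult_inv_pos.
    - apply Rmult_le_pos; [apply Rmult_le_pos|apply pow2_ge_0]; nra.
    - apply Rmult_lt_0_compat; [apply pow_lt|]; lra. }
  lra.
Qed.

Lemma kernel_nondecreasing m y s : 0 < s < 1 -> 0 <= m <= y -> kernel m s <= kernel y s.
Proof.
  intros Hs Hm. unfold kernel.
  assert (HD : 0 < 1 - (1 - m) * s ^ 2) by nra.
  assert (HE : 0 < 1 - (1 - y) * s ^ 2) by nra.
  assert (Diff : y / (1 - (1 - y) * s ^ 2) - m / (1 - (1 - m) * s ^ 2)
               = (1 - s ^ 2) * (y - m) / ((1 - (1 - y) * s ^ 2) * (1 - (1 - m) * s ^ 2))).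
  { field. lra. }
  assert (0 <= (1 - s ^ 2) * (y - m) / ((1 - (1 - y) * s ^ 2) * (1 - (1 - m) * s ^ 2))).
  { apply Rle_mult_inv_pos; [apply Rmult_le_pos|apply Rmult_lt_0_compat]; nra. }
  lra.
Qed.

(* Hence G is concave and nondecreasing on [0, 1): Jensen's inequality for G,
   obtained by integrating the pointwise inequality for the kernel. *)
Lemma Gbloch_jensen n (p y : nat -> R) yb :
  (forall i, (i < n)%nat -> 0 <= p i) -> sumR n p = 1 ->
  (forall i, (i < n)%nat -> 0 <= y i < 1) ->
  sumR n (fun i => p i * y i) <= yb -> yb < 1 ->
  sumR n (fun i => p i * Gbloch (y i)) <= Gbloch yb.
Proof.
  intros Hp Hsum Hy Hmean Hyb.
  set (m := sumR n (fun i => p i * y i)) in *.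
  assert (Hm : 0 <= m).
  { apply sumR_nonneg. intros i Hi. apply Rmult_le_pos; [|apply Hy]; auto. }
  apply (is_RInt_le (fun s => sumR n (fun i => p i * kernel (y i) s)) (kernel yb) 0 1
           _ _ Rle_0_1).
  - apply (sumR_RInt n (fun i s => p i * kernel (y i) s)). intros i Hi.
    apply (is_RInt_scal (V := R_NormedModule)), Gbloch_RInt, Hy, Hi.
  - apply Gbloch_RInt. lra.
  - intros s Hs. apply Rle_trans with (kernel m s).
    + apply (jensen_supporting_line n p y (fun x => kernel x s)
               ((1 - s ^ 2) / (1 - (1 - m) * s ^ 2) ^ 2) Hp Hsum).
      intros i Hi. apply kernel_tangent; [exact Hs|apply Hy, Hi|exact Hm].
    + apply kernel_nondecreasing; lra.
Qed.

(* A function continuous on [a, b] with nonnegative derivative on (a, b) is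
   nondecreasing there.  The mean value theorem is applied to the derivative
   clipped at 0, which agrees with it on (a, b). *)
Lemma nondecreasing_of_derive_nonneg (f df : R -> R) a b : a <= b ->
  (forall x, a < x < b -> is_derive f x (df x) /\ 0 <= df x) ->
  (forall x, a <= x <= b -> continuity_pt f x) ->
  f a <= f b.
Proof.
  intros Hab Hder Hcont.
  destruct (MVT_gen f a b (fun x => Rmax 0 (df x))) as [c [_ Hc]].
  - rewrite Rmin_left, Rmax_right by lra. intros x Hx.
    destruct (Hder x Hx) as [Hd Hpos]. now rewrite Rmax_right.
  - rewrite Rmin_left, Rmax_right by lra. exact Hcont.
  - pose proof (Rmax_l 0 (df c)). nra.
Qed.

Lemma Hbloch_scaled_derive w a : 0 <= w <= 1 -> 0 < a < 1 ->
  is_derive (fun t => Hbloch (t * w)) a (w * dHbloch (a * w)).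
Proof.
  intros Hw Ha. destruct (Req_dec w 0) as [->|Hw0].
  - rewrite Rmult_0_l.
    apply (is_derive_ext (fun _ => Hbloch 0)); [intros t; now rewrite Rmult_0_r|].
    apply (is_derive_const (K := R_AbsRing) (V := R_NormedModule)).
  - apply (is_derive_comp Hbloch (fun t => t * w)).
    + apply Hbloch_derive. split; nra.
    + auto_derive; [exact I|ring].
Qed.

Lemma Hbloch_scaled_continuous w a : 0 <= w <= 1 -> 0 <= a < 1 ->
  continuity_pt (fun t => Hbloch (t * w)) a.
Proof.
  intros Hw Ha. apply (continuity_pt_comp (fun t => t * w) Hbloch).
  - apply continuity_pt_of_ex_derive. auto_derive. exact I.
  - apply Hbloch_continuous. split; nra.
Qed.

(* The gain as a function of the dephasing strength a in [0, 1): weights p, squared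
   transverse lengths w i of the ensemble states and wb of their average state. *)
Section Gain.

Variables (n : nat) (p w : nat -> R) (wb : R).
Hypothesis p_nonneg : forall i, (i < n)%nat -> 0 <= p i.
Hypothesis p_sum : sumR n p = 1.
Hypothesis w_range : forall i, (i < n)%nat -> 0 <= w i <= 1.
Hypothesis wb_le_1 : wb <= 1.
Hypothesis mean_w_le : sumR n (fun i => p i * w i) <= wb.

Definition gain (a : R) : R :=
  Hbloch (a * wb) - sumR n (fun i => p i * Hbloch (a * w i)).

Definition gain_deriv (a : R) : R :=
  wb * dHbloch (a * wb) - sumR n (fun i => p i * (w i * dHbloch (a * w i))).

Lemma wb_range : 0 <= wb <= 1.
Proof.
  split; [|exact wb_le_1]. eapply Rle_trans; [|exact mean_w_le].
  apply sumR_nonneg. intros i Hi. apply Rmult_le_pos; [|apply w_range]; auto.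
Qed.

Lemma gain_derive a : 0 < a < 1 -> is_derive gain a (gain_deriv a).
Proof.
  intros Ha. apply (is_derive_minus (K := R_AbsRing) (V := R_NormedModule)).
  - apply Hbloch_scaled_derive; [apply wb_range|exact Ha].
  - apply (sumR_derive n (fun i t => p i * Hbloch (t * w i))). intros i Hi.
    apply is_derive_scal, Hbloch_scaled_derive; [apply w_range, Hi|exact Ha].
Qed.

Lemma gain_continuous a : 0 <= a < 1 -> continuity_pt gain a.
Proof.
  intros Ha. apply (continuity_pt_minus (fun t => Hbloch (t * wb))).
  - apply Hbloch_scaled_continuous; [apply wb_range|exact Ha].
  - apply (sumR_continuity n (fun i t => p i * Hbloch (t * w i))). intros i Hi.
    apply (continuity_pt_mult (fun _ => p i)).
    + apply continuity_pt_const. now intros u v.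
    + apply Hbloch_scaled_continuous; [apply w_range, Hi|exact Ha].
Qed.

(* a times the derivative is a Jensen gap of G, hence nonnegative. *)
Lemma gain_deriv_Gbloch a : 0 < a < 1 ->
  a * gain_deriv a = (Gbloch (a * wb) - sumR n (fun i => p i * Gbloch (a * w i))) / (2 * ln 2).
Proof.
  intros Ha. pose proof wb_range. pose proof ln2_pos.
  unfold gain_deriv. rewrite Rmult_minus_distr_l, <- sumR_scal.
  rewrite (sumR_ext n _ (fun i => / (2 * ln 2) * (p i * Gbloch (a * w i)))).
  - rewrite sumR_scal.
    replace (a * (wb * dHbloch (a * wb))) with ((a * wb) * dHbloch (a * wb)) by ring.
    rewrite Gbloch_dHbloch by (split; nra). field. lra.
  - intros i Hi. specialize (w_range i Hi).
    replace (a * (p i * (w i * dHbloch (a * w i)))) with (p i * ((a * w i) * dHbloch (a * w i)))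
      by ring.
    rewrite Gbloch_dHbloch by (split; nra). field. lra.
Qed.

Lemma gain_deriv_nonneg a : 0 < a < 1 -> 0 <= gain_deriv a.
Proof.
  intros Ha. pose proof wb_range. pose proof ln2_pos.
  assert (Hjensen : sumR n (fun i => p i * Gbloch (a * w i)) <= Gbloch (a * wb)).
  { apply Gbloch_jensen; [exact p_nonneg|exact p_sum| | |nra].
    - intros i Hi. specialize (w_range i Hi). split; nra.
    - rewrite (sumR_ext n _ (fun i => a * (p i * w i))) by (intros; ring).
      rewrite sumR_scal. apply Rmult_le_compat_l; [lra|exact mean_w_le]. }
  assert (0 <= a * gain_deriv a).
  { rewrite gain_deriv_Gbloch by exact Ha. apply Rle_mult_inv_pos; lra. }
  nra.
Qed.

Lemma gain_nondecreasing a1 a2 : 0 <= a1 -> a1 <= a2 -> a2 < 1 -> gain a1 <= gain a2.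
Proof.
  intros H1 H12 H2. apply (nondecreasing_of_derive_nonneg gain gain_deriv a1 a2 H12).
  - intros a Ha. split; [apply gain_derive|apply gain_deriv_nonneg]; lra.
  - intros a Ha. apply gain_continuous. lra.
Qed.

End Gain.

Lemma exp_le_mono x y : x <= y -> exp x <= exp y.
Proof.
  intros [H|H]; [left; apply exp_increasing, H|right; now rewrite H].
Qed.

Definition dephasing (Delta g : R) : R := 1 - exp (- g ^ 2 / Delta ^ 2).

Lemma dephasing_range Delta g : 0 < Delta -> 0 <= dephasing Delta g < 1.
Proof.
  intros HD. unfold dephasing.
  assert (Hq : 0 <= g ^ 2 / Delta ^ 2)
    by (apply Rle_mult_inv_pos; [apply pow2_ge_0|apply pow_lt; lra]).
  pose proof (exp_pos (- g ^ 2 / Delta ^ 2)).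
  assert (exp (- g ^ 2 / Delta ^ 2) <= exp 0) by (apply exp_le_mono; unfold Rdiv in *; lra).
  rewrite exp_0 in *. lra.
Qed.

Lemma dephasing_nondecreasing Delta g1 g2 : 0 < Delta -> 0 <= g1 -> g1 <= g2 ->
  dephasing Delta g1 <= dephasing Delta g2.
Proof.
  intros HD H1 H12. unfold dephasing.
  apply Rplus_le_compat_l, Ropp_le_contravar, exp_le_mono. unfold Rdiv.
  apply Rmult_le_compat_r; [left; apply Rinv_0_lt_compat, pow_lt; lra|nra].
Qed.

Lemma HB_Ia_arg Delta g x :
  H_B (Ia_arg Delta g x) = Hbloch (dephasing Delta g * (1 - x ^ 2)).
Proof. unfold Hbloch, Ia_arg, dephasing. do 4 f_equal. ring. Qed.

Theorem theorem1 (n : nat) (p c : nat -> R) (Delta : R) :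
  (forall i, (i < n)%nat -> 0 < p i) ->
  sumR n p = 1 ->
  (forall i, (i < n)%nat -> -1 <= c i <= 1) ->
  0 < Delta ->
  forall g1 g2 : R, 0 <= g1 -> g1 <= g2 ->
    Ia n p c Delta g1 <= Ia n p c Delta g2.
Proof.
  intros Hp Hsum Hc HD g1 g2 Hg1 Hg12.
  assert (Hp0 : forall i, (i < n)%nat -> 0 <= p i) by (intros i Hi; specialize (Hp i Hi); lra).
  set (w := fun i => 1 - c i ^ 2).
  set (wb := 1 - sumR n (fun i => p i * c i) ^ 2).
  assert (HIa : forall g, Ia n p c Delta g = gain n p w wb (dephasing Delta g)).
  { intros g. unfold Ia, gain. rewrite HB_Ia_arg. f_equal.
    apply sumR_ext. intros i _. now rewrite HB_Ia_arg. }
  rewrite !HIa. apply gain_nondecreasing.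
  - exact Hp0.
  - exact Hsum.
  - intros i Hi. specialize (Hc i Hi). unfold w. split; nra.
  - unfold wb. pose proof (pow2_ge_0 (sumR n (fun i => p i * c i))). lra.
  - exact (mean_one_minus_sq n p c Hp0 Hsum).
  - apply dephasing_range, HD.
  - apply dephasing_nondecreasing; assumption.
  - apply dephasing_range, HD.
Qed.
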